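(* Let $t\ge 1$ and $c\in\mathbb{Z}$. Then \[ \begin{bmatrix}K;c+2\\ t\end{bmatrix}=(q^t+q^{-t})\begin{bmatrix}K;c+1\\ t\end{bmatrix}-\begin{bmatrix}K;c\\ t\end{bmatrix}+\begin{bmatrix}K;c\\ t-2\end{bmatrix}. \]
   Context: Let $q$ be an indeterminate and work in the Laurent polynomial ring $\mathbb{Q}(q)[K,K^{-1}]$ (the Cartan part of $\mathcal{U}_q(\mathfrak{sl}_2)$). Let $\{n\}_q=\frac{q^n-q^{-n}}{q-q^{-1}}$, $\{n\}_q!=\{n\}_q\cdots\{1\}_q$, $[K;a]=\frac{q^aK-q^{-a}K^{-1}}{q-q^{-1}}$ for $a\in\mathbb{Z}$, and for $c\in\mathbb{Z}$, $t\in\mathbb{N}_0$, $\begin{bmatrix}K;c\\ t\end{bmatrix}=\frac{[K;c][K;c-1]\cdots[K;c-t+1]}{\{t\}_q!}$, with $\begin{bmatrix}K;c\\ 0\end{bmatrix}=1$ and $\begin{bmatrix}K;c\\ t\end{bmatrix}=0$ for $t<0$. *)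

From HB Require Import structures.
From mathcomp Require Import all_boot all_order all_algebra fraction.
Set Implicit Arguments. Unset Strict Implicit. Unset Printing Implicit Defensive.
Import Order.TTheory GRing.Theory Num.Theory.
Local Open Scope ring_scope.

Definition Qq : fieldType := {fraction {poly rat}}.
(* Ambient field Q(q)(K), the fraction field of Q(q)[K]; it contains the
   Laurent polynomial ring Q(q)[K,K^-1] as a subring. *)
Definition LK : fieldType := {fraction {poly Qq}}.

Definition q0 : Qq := FracField.tofrac ('X : {poly rat}).
Definition q : LK := FracField.tofrac (q0%:P : {poly Qq}).
Definition K : LK := FracField.tofrac ('X : {poly Qq}).

Definition qint (n : int) : LK := (q ^ n - q ^ (- n)) / (q - q ^ (-1)).
Definition qfact (t : nat) : LK := \prod_(i < t) qint (i.+1)%:Z.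
Definition Kbr (a : int) : LK := (q ^ a * K - q ^ (- a) * K ^ (-1)) / (q - q ^ (-1)).
(* [K; c \\ t] for t : int; zero for t < 0, 1 for t = 0 *)
Definition Kbin (c t : int) : LK :=
  if (t < 0) then 0
  else (\prod_(i < `|t|%N) Kbr (c - i%:Z)) / qfact `|t|%N.

From HB Require Import structures.
From mathcomp Require Import all_boot all_order all_algebra fraction.
From mathcomp Require Import ring.
Import Order.TTheory GRing.Theory Num.Theory.
Local Open Scope ring_scope.

(* Write t = n + 2. The three binomials of degree t share the factor
   P = [K;c][K;c-1]...[K;c-n+1], and [K;c choose t-2] = P / {n}_q!. Clearing the
   denominator {t}_q! = {n}_q! {n+1}_q {n+2}_q, the claim becomes the quadratic
   identity between q-brackets
     [K;c+2][K;c+1] = (q^t + q^-t)[K;c+1][K;c-n] - [K;c-n][K;c-n-1] + {n+1}_q {n+2}_q,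
   a rational-function identity in q^c, q^n, q and K. For t = 1 the claim is the
   three-term relation [K;c+2] + [K;c] = (q + q^-1)[K;c+1]. *)

Section QuantumBinomial.

Variables (F : fieldType) (q K : F).
Hypotheses (q_neq0 : q != 0) (K_neq0 : K != 0).
Hypothesis q_not_root1 : forall k, (0 < k)%N -> q ^+ k != 1.

(* At [F := LK] these are convertible to [qint], [qfact], [Kbr] and [Kbin]. *)
Definition qint_of (n : int) : F := (q ^ n - q ^ (- n)) / (q - q ^ (-1)).
Definition qfact_of (t : nat) : F := \prod_(i < t) qint_of (i.+1)%:Z.
Definition Kbr_of (a : int) : F := (q ^ a * K - q ^ (- a) * K ^ (-1)) / (q - q ^ (-1)).
Definition Kbin_of (c t : int) : F :=
  if (t < 0) then 0
  else (\prod_(i < `|t|%N) Kbr_of (c - i%:Z)) / qfact_of `|t|%N.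

Lemma expq_neq0 (a : int) : q ^ a != 0.
Proof. exact: expfz_neq0. Qed.

Lemma expq_subN_neq0 n : (0 < n)%N -> q ^ n%:Z - q ^ (- n%:Z) != 0.
Proof.
move=> n_gt0; rewrite -invr_expz subr_eq0; apply/eqP => qn_inv.
have /eqP[] : q ^+ (n + n) != 1 by rewrite q_not_root1 ?addn_gt0 ?n_gt0.
by rewrite exprD exprnP {2}qn_inv mulfV ?expq_neq0.
Qed.

Lemma qint_of_neq0 n : (0 < n)%N -> qint_of n%:Z != 0.
Proof.
move=> n_gt0; rewrite mulf_neq0 ?invr_eq0 ?expq_subN_neq0 //.
exact: (@expq_subN_neq0 1).
Qed.

Lemma qfact_ofS n : qfact_of n.+1 = qfact_of n * qint_of n.+1%:Z.
Proof. by rewrite /qfact_of big_ord_recr. Qed.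

Lemma qfact_of_neq0 n : qfact_of n != 0.
Proof. by apply/prodf_neq0 => i _; apply: qint_of_neq0. Qed.

Lemma prod_Kbr_of_recl c n :
  \prod_(i < n.+1) Kbr_of (c - i%:Z) = Kbr_of c * \prod_(i < n) Kbr_of (c - 1 - i%:Z).
Proof.
rewrite big_ord_recl subr0; congr (_ * _); apply: eq_bigr => i _.
by rewrite lift0 -addn1 PoszD opprD addrA addrAC.
Qed.

Lemma Kbr_of_three_term a :
  Kbr_of (a + 2) = (q ^ 1%:Z + q ^ (- 1%:Z)) * Kbr_of (a + 1) - Kbr_of a.
Proof.
rewrite /Kbr_of !opprD !expfzDr // -!invr_expz !expr1z.
field; by rewrite q_neq0 K_neq0 expq_neq0 subr_eq0 -expr2 (@q_not_root1 2).
Qed.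

Lemma Kbr_of_quadratic a b :
  Kbr_of (a + 1) * Kbr_of a =
    (q ^ (a - b + 1) + q ^ (- (a - b + 1))) * Kbr_of a * Kbr_of b
    - Kbr_of b * Kbr_of (b - 1) + qint_of (a - b) * qint_of (a - b + 1).
Proof.
rewrite /Kbr_of /qint_of !opprD !opprK !expfzDr // -!invr_expz !expr1z.
have qa_neq0 := expq_neq0 a; have qb_neq0 := expq_neq0 b.
field; by rewrite q_neq0 K_neq0 qa_neq0 qb_neq0 subr_eq0 -expr2 (@q_not_root1 2).
Qed.

Lemma Kbin_of_recurrence (t : nat) (c : int) :
  (1 <= t)%N ->
  Kbin_of (c + 2) t%:Z =
    (q ^ t%:Z + q ^ (- t%:Z)) * Kbin_of (c + 1) t%:Z - Kbin_of c t%:Z + Kbin_of c (t%:Z - 2).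
Proof.
case: t => [|[|n]] // _.
  by rewrite /Kbin_of /= !big_ord1 !subr0 Kbr_of_three_term; ring.
have -> : n.+2%:Z - 2 = n by rewrite -addn2 PoszD addrK.
rewrite /Kbin_of /=; set P := \prod_(i < n) Kbr_of (c - i%:Z).
have c21 : c + 2 - 1 = c + 1 by rewrite -addrA.
have c10 : c + 1 - 1 = c by rewrite addrK.
have top : \prod_(i < n.+2) Kbr_of (c + 2 - i%:Z) = Kbr_of (c + 2) * Kbr_of (c + 1) * P.
  by rewrite !prod_Kbr_of_recl c21 c10 mulrA.
have mid : \prod_(i < n.+2) Kbr_of (c + 1 - i%:Z) = Kbr_of (c + 1) * P * Kbr_of (c - n%:Z).
  by rewrite prod_Kbr_of_recl c10 big_ord_recr mulrA.
have bot : \prod_(i < n.+2) Kbr_of (c - i%:Z) = P * Kbr_of (c - n%:Z) * Kbr_of (c - n.+1%:Z).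
  by rewrite !big_ord_recr.
have gap : c + 1 - (c - n%:Z) = n.+1%:Z by rewrite -addn1 PoszD; ring.
have := Kbr_of_quadratic (c + 1) (c - n%:Z).
have pred : c - n%:Z - 1 = c - n.+1%:Z by rewrite -addn1 PoszD opprD addrA.
rewrite gap pred -addrA -!PoszD !addn1 => quad.
rewrite top mid bot !qfact_ofS quad.
have fact_neq0 := qfact_of_neq0 n.
have int1_neq0 := @qint_of_neq0 n.+1 isT; have int2_neq0 := @qint_of_neq0 n.+2 isT.
by field; rewrite fact_neq0 int1_neq0 int2_neq0.
Qed.

End QuantumBinomial.

Lemma q_neq0 : q != 0.
Proof. by rewrite tofrac_eq0 polyC_eq0 tofrac_eq0 polyX_eq0. Qed.

Lemma K_neq0 : K != 0.
Proof. by rewrite tofrac_eq0 polyX_eq0. Qed.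

Lemma q_not_root1 k : (0 < k)%N -> q ^+ k != 1.
Proof.
move=> k_gt0; rewrite -tofracXn -polyC_exp -tofrac1 tofrac_eq -polyC1 (inj_eq polyC_inj).
rewrite -tofracXn -tofrac1 tofrac_eq; apply/eqP => Xk_eq1.
by have := size_polyXn rat k; rewrite Xk_eq1 size_poly1; case: k k_gt0 {Xk_eq1}.
Qed.

Theorem proposition6p1 (t : nat) (c : int) :
  (1 <= t)%N ->
  Kbin (c + 2) t%:Z =
    (q ^ t%:Z + q ^ (- t%:Z)) * Kbin (c + 1) t%:Z - Kbin c t%:Z + Kbin c (t%:Z - 2).
Proof. exact: Kbin_of_recurrence q_neq0 K_neq0 q_not_root1 t c. Qed.
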